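(* Let $\mathcal F=(f_1,\dots,f_m)\colon\mathbb R^n\to\mathbb R^m$ be continuously differentiable with each $f_i$ convex, let $Q\subset\mathbb R^m$ be nonempty, closed and convex, $Q^+:=Q-\mathbb R^m_+$, and let $x^k\in\mathbb R^n$. Set $p^k:=P_{Q^+}(\mathcal F(x^k))$, $\rho^k:=\mathcal F(x^k)-p^k$, $Q^+_k:=\{y\in\mathbb R^m:\langle\rho^k,y-p^k\rangle\le0\}$ and $\delta_k(x):=\tfrac12\mathrm{dist}^2(\mathcal F(x),Q^+_k)$ (so $\delta_k\equiv0$ if $\rho^k=0$, and $\delta_k(x)=[\langle\rho^k,\mathcal F(x)-p^k\rangle]_+^2/(2\|\rho^k\|^2)$ if $\rho^k\ne0$). Then $\delta_k$ is convex on $\mathbb R^n$.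
   Context: $Q-\mathbb R^m_+:=\{y-u:y\in Q,u\in\mathbb R^m_+\}$; $P_{Q^+}$ is the Euclidean metric projection onto $Q^+$; $[t]_+:=\max(t,0)$. *)

From HB Require Import structures.
From mathcomp Require Import all_boot all_order all_algebra.
From mathcomp Require Import all_classical all_reals all_analysis.
Set Implicit Arguments. Unset Strict Implicit. Unset Printing Implicit Defensive.
Import Order.TTheory GRing.Theory Num.Theory.
Import numFieldNormedType.Exports.
Local Open Scope classical_set_scope.
Local Open Scope ring_scope.

Section Defs.
Variable R : realType.

Definition dotp (m : nat) (u v : 'rV[R]_m) : R := \sum_(i < m) u 0 i * v 0 i.
Definition sqnorm (m : nat) (u : 'rV[R]_m) : R := dotp u u.

Definition convex_fun (n : nat) (g : 'rV[R]_n -> R) : Prop :=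
  forall (x y : 'rV[R]_n) (t : R), 0 <= t -> t <= 1 ->
    g (t *: x + (1 - t) *: y) <= t * g x + (1 - t) * g y.

Definition C1 (n : nat) (g : 'rV[R]_n -> R) : Prop :=
  (forall x, differentiable g x) /\
  (forall v : 'rV[R]_n, continuous (fun x => 'D_v g x)).

Definition Qplus (m : nat) (Q : set 'rV[R]_m) : set 'rV[R]_m :=
  [set y | exists q u : 'rV[R]_m, Q q /\ (forall i, 0 <= u 0 i) /\ y = q - u].

Definition is_proj (m : nat) (S : set 'rV[R]_m) (z p : 'rV[R]_m) : Prop :=
  S p /\ forall y, S y -> sqnorm (z - p) <= sqnorm (z - y).

Definition dist2 (m : nat) (z : 'rV[R]_m) (S : set 'rV[R]_m) : R :=
  inf [set sqnorm (z - y) | y in S].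

Definition halfspace (m : nat) (rho p : 'rV[R]_m) : set 'rV[R]_m :=
  [set y | dotp rho (y - p) <= 0].

End Defs.

(** The residual [rho = F xk - pk] is componentwise nonnegative, because [Q^+]
    is stable under subtracting nonnegative vectors and [pk] is the nearest
    point of [Q^+].  The squared distance to the half-space is
    [[<rho, z - pk>]_+^2 / |rho|^2], so [delta_k] is the nondecreasing convex
    function [s |-> [s]_+^2] composed with [x |-> <rho, F x - pk>], which is
    convex as a nonnegative combination of the convex components of [F]. *)

From HB Require Import structures.
From mathcomp Require Import all_boot all_order all_algebra.
From mathcomp Require Import all_classical all_reals all_analysis.
From mathcomp Require Import ring lra.
Set Implicit Arguments. Unset Strict Implicit. Unset Printing Implicit Defensive.
Import Order.TTheory GRing.Theory Num.Theory.
Import numFieldNormedType.Exports.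
Local Open Scope classical_set_scope.
Local Open Scope ring_scope.

Section Euclidean.
Variables (R : realType) (m : nat).
Implicit Types (u v w : 'rV[R]_m) (c : R).

Lemma dotpC u v : dotp u v = dotp v u.
Proof. by apply: eq_bigr => i _; rewrite mulrC. Qed.

Lemma dotpBr u v w : dotp u (v - w) = dotp u v - dotp u w.
Proof. by rewrite /dotp -sumrB; apply: eq_bigr => i _; rewrite !mxE; ring. Qed.

Lemma dotpZr u v c : dotp u (c *: v) = c * dotp u v.
Proof. by rewrite /dotp mulr_sumr; apply: eq_bigr => i _; rewrite !mxE; ring. Qed.

Lemma sqnorm_ge0 u : 0 <= sqnorm u.
Proof. by apply: sumr_ge0 => i _; rewrite -expr2 sqr_ge0. Qed.

Lemma sqnormD u v : sqnorm (u + v) = sqnorm u + 2 * dotp u v + sqnorm v.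
Proof.
by rewrite /sqnorm /dotp mulr_sumr -!big_split /=; apply: eq_bigr => i _; rewrite !mxE; ring.
Qed.

Lemma sqnormZ u c : sqnorm (c *: u) = c ^+ 2 * sqnorm u.
Proof. by rewrite /sqnorm /dotp mulr_sumr; apply: eq_bigr => i _; rewrite !mxE; ring. Qed.

Lemma sqnorm0_dotp u v : sqnorm u = 0 -> dotp u v = 0.
Proof.
move=> u0; rewrite /dotp big1 // => i _.
have /eqP : u 0 i * u 0 i = 0.
  apply: (@psumr_eq0P R _ xpredT (fun j => u 0 j * u 0 j)) => // j _.
  by rewrite -expr2 sqr_ge0.
by rewrite mulf_eq0 orbb => /eqP ->; rewrite mul0r.
Qed.

Lemma dotp_sqr_le u v : dotp u v ^+ 2 <= sqnorm u * sqnorm v.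
Proof.
set N := sqnorm u; set a := dotp u v.
have [N0|N_neq0] := eqVneq N 0.
  by rewrite /a sqnorm0_dotp // N0 mul0r expr0n.
have N_gt0 : 0 < N by rewrite lt_def N_neq0 sqnorm_ge0.
have := sqnorm_ge0 (N *: v - a *: u).
rewrite sqnormD -scaleN1r !sqnormZ !dotpZr dotpC dotpZr -/a -/N => expansion_ge0.
by rewrite -(ler_pM2l N_gt0); nra.
Qed.

Lemma dotp_delta_mx u (i : 'I_m) : dotp u (delta_mx 0 i) = u 0 i.
Proof.
rewrite /dotp (bigD1 i) //= big1 => [|j /negbTE ji]; rewrite !mxE ?eqxx ?ji /=.
  by rewrite mulr1 addr0.
by rewrite mulr0.
Qed.

Lemma sqnorm_delta_mx (i : 'I_m) : sqnorm (delta_mx 0 i : 'rV[R]_m) = 1.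
Proof. by rewrite /sqnorm dotp_delta_mx mxE !eqxx. Qed.

End Euclidean.

Lemma inf_lbound_mem (R : realType) (E : set R) x : E x -> lbound E x -> inf E = x.
Proof.
move=> Ex lbx; apply/eqP; rewrite eq_le lb_le_inf ?andbT //; last by exists x.
exact: (ge_inf (ex_intro _ x lbx)).
Qed.

Lemma dist2_halfspace (R : realType) (m : nat) (rho p z : 'rV[R]_m) :
  dist2 z (halfspace rho p) = Num.max (dotp rho (z - p)) 0 ^+ 2 / sqnorm rho.
Proof.
set a := dotp rho (z - p); set N := sqnorm rho.
have [N0|N_neq0] := eqVneq N 0.
  rewrite N0 invr0 mulr0; apply: inf_lbound_mem; last first.
    by move=> _ [y _ <-]; apply: sqnorm_ge0.
  exists z; first by rewrite /halfspace /= sqnorm0_dotp.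
  by rewrite subrr /sqnorm /dotp big1 // => i _; rewrite mxE mul0r.
have N_gt0 : 0 < N by rewrite lt_def N_neq0 sqnorm_ge0.
set M := Num.max a 0.
apply: inf_lbound_mem.
  (* the foot of the perpendicular from [z] *)
  exists (z - (M / N) *: rho).
    rewrite /halfspace /= addrAC dotpBr dotpZr -/a -/N mulfVK //.
    by rewrite subr_le0 le_max lexx.
  by rewrite opprB addrC subrK sqnormZ -/N expr_div_n; field.
move=> _ [y y_half <-]; rewrite /halfspace /= in y_half.
rewrite ler_pdivrMr //.
have [a_le0|a_gt0] := leP a 0.
  by rewrite /M max_r // expr0n mulr_ge0 // sqnorm_ge0.
rewrite /M max_l; last exact: ltW.
have zy : dotp rho (z - y) = a - dotp rho (y - p).
  by rewrite /a -dotpBr opprB addrA subrK.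
have := dotp_sqr_le rho (z - y); rewrite zy -/N => CS.
have : a ^+ 2 <= (a - dotp rho (y - p)) ^+ 2.
  by rewrite ler_sqr ?nnegrE; lra.
by rewrite mulrC; lra.
Qed.

Lemma Qplus_subr (R : realType) (m : nat) (Q : set 'rV[R]_m) y (u : 'rV[R]_m) :
  Qplus Q y -> (forall i, 0 <= u 0 i) -> Qplus Q (y - u).
Proof.
move=> [q [v [Qq [v_ge0 ->]]]] u_ge0; exists q, (v + u); split => //; split.
  by move=> i; rewrite mxE addr_ge0.
by rewrite opprD addrA.
Qed.

Lemma proj_residual_ge0 (R : realType) (m : nat) (S : set 'rV[R]_m) (z p : 'rV[R]_m) :
  (forall y u : 'rV[R]_m, S y -> (forall i, 0 <= u 0 i) -> S (y - u)) ->
  is_proj S z p -> forall i, 0 <= (z - p) 0 i.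
Proof.
move=> S_sub [Sp p_min] i; rewrite leNgt; apply/negP => r_lt0.
set t := - (z - p) 0 i; set e : 'rV[R]_m := delta_mx 0 i.
have t_gt0 : 0 < t by rewrite oppr_gt0.
have S_pe : S (p - t *: e).
  by apply: S_sub => // j; rewrite !mxE; apply: mulr_ge0 (ltW t_gt0) (ler0n _ _).
have := p_min _ S_pe.
rewrite (_ : z - (p - t *: e) = (z - p) + t *: e); last first.
  by apply/rowP => j; rewrite !mxE; ring.
rewrite (sqnormD (z - p)) sqnormZ dotpZr dotp_delta_mx sqnorm_delta_mx /t.
nra.
Qed.

Section Convexity.
Variables (R : realType) (n : nat).
Implicit Types (g : 'rV[R]_n -> R).

Lemma convex_funZ g (c : R) : 0 <= c -> convex_fun g -> convex_fun (fun x => c * g x).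
Proof.
move=> c_ge0 g_cvx x y t t_ge0 t_le1.
rewrite mulrCA [X in _ <= _ + X]mulrCA -mulrDr.
exact: ler_wpM2l (g_cvx x y t t_ge0 t_le1).
Qed.

Lemma convex_fun_comp g (phi : R -> R) :
  {homo phi : a b / a <= b} ->
  (forall a b t, 0 <= t -> t <= 1 ->
     phi (t * a + (1 - t) * b) <= t * phi a + (1 - t) * phi b) ->
  convex_fun g -> convex_fun (phi \o g).
Proof.
move=> phi_mono phi_cvx g_cvx x y t t_ge0 t_le1 /=.
exact: le_trans (phi_mono _ _ (g_cvx x y t t_ge0 t_le1)) (phi_cvx _ _ _ t_ge0 t_le1).
Qed.

Lemma convex_fun_dotp (m : nat) (G : 'rV[R]_n -> 'rV[R]_m) (w p : 'rV[R]_m) :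
  (forall i, 0 <= w 0 i) -> (forall i, convex_fun (fun x => G x 0 i)) ->
  convex_fun (fun x => dotp w (G x - p)).
Proof.
move=> w_ge0 G_cvx x y t t_ge0 t_le1.
rewrite /dotp !mulr_sumr -big_split; apply: ler_sum => i _; rewrite !mxE.
have := ler_wpM2l (w_ge0 i) (G_cvx i x y t t_ge0 t_le1).
by rewrite /=; nra.
Qed.

End Convexity.

Lemma sqr_max0_nondecreasing (R : realType) :
  {homo (fun s : R => Num.max s 0 ^+ 2) : a b / a <= b}.
Proof.
move=> a b ab; have max0_ge0 (s : R) : 0 <= Num.max s 0 by rewrite le_max lexx orbT.
by rewrite ler_sqr ?nnegrE ?max0_ge0 // ge_max max0_ge0 andbT le_max ab.
Qed.

Lemma sqr_max0_convex (R : realType) (a b t : R) : 0 <= t -> t <= 1 ->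
  Num.max (t * a + (1 - t) * b) 0 ^+ 2 <=
  t * Num.max a 0 ^+ 2 + (1 - t) * Num.max b 0 ^+ 2.
Proof.
move=> t_ge0 t_le1; have t'_ge0 : 0 <= 1 - t by lra.
have max0_ge0 (s : R) : 0 <= Num.max s 0 by rewrite le_max lexx orbT.
have a_le : a <= Num.max a 0 by rewrite le_max lexx.
have b_le : b <= Num.max b 0 by rewrite le_max lexx.
have := max0_ge0 a; have := max0_ge0 b.
set A := Num.max a 0 in a_le *; set B := Num.max b 0 in b_le * => B_ge0 A_ge0.
have max_le : Num.max (t * a + (1 - t) * b) 0 <= t * A + (1 - t) * B.
  by rewrite ge_max; apply/andP; split; nra.
have : Num.max (t * a + (1 - t) * b) 0 ^+ 2 <= (t * A + (1 - t) * B) ^+ 2.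
  by rewrite ler_sqr ?nnegrE ?max0_ge0 //; nra.
(* convexity of the square: the gap is t (1 - t) (A - B)^2 *)
have := mulr_ge0 (mulr_ge0 t_ge0 t'_ge0) (sqr_ge0 (A - B)).
nra.
Qed.

Theorem lemma5 (R : realType) (n m : nat) (F : 'rV[R]_n -> 'rV[R]_m)
  (Q : set 'rV[R]_m) (xk : 'rV[R]_n) (pk : 'rV[R]_m) :
  (forall i : 'I_m, C1 (fun x => F x 0 i)) ->
  (forall i : 'I_m, convex_fun (fun x => F x 0 i)) ->
  Q !=set0 -> closed Q -> convex_set Q ->
  is_proj (Qplus Q) (F xk) pk ->
  let rhok := F xk - pk in
  convex_fun (fun x => 2^-1 * dist2 (F x) (halfspace rhok pk)).
Proof.
move=> _ F_cvx _ _ _ pk_proj rho.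
have rho_ge0 := proj_residual_ge0 (@Qplus_subr _ _ Q) pk_proj.
have -> : (fun x => 2^-1 * dist2 (F x) (halfspace rho pk)) =
    (fun x => 2^-1 * ((sqnorm rho)^-1 *
       (fun s => Num.max s 0 ^+ 2) (dotp rho (F x - pk)))).
  by apply: funext => x /=; rewrite dist2_halfspace [_ / sqnorm _]mulrC.
apply: convex_funZ => //; apply: convex_funZ; first by rewrite invr_ge0 sqnorm_ge0.
apply: (convex_fun_comp (@sqr_max0_nondecreasing R)); first exact: sqr_max0_convex.
exact: convex_fun_dotp.
Qed.
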